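(* Let $n\ge3$ and $L>1$, and define $$\sigma_{0,2}=\frac{(n-2)(1+L^{n-1})}{L^{n-1}-L},\qquad \sigma_{2,1}=\frac{L^{n+2}(2+Ln)+(n+2L)-\sqrt{\left(L^{n+2}(2+Ln)+(n+2L)\right)^2-8Ln(L^{n+2}-1)^2}}{2L(L^{n+2}-1)}.$$ Then $\sigma_{2,1}\le\sigma_{0,2}$. *)

From Stdlib Require Import Reals.
Open Scope R_scope.

Definition sigma02 (n : nat) (L : R) : R :=
  (INR n - 2) * (1 + L ^ (n - 1)) / (L ^ (n - 1) - L).

Definition sigA (n : nat) (L : R) : R :=
  L ^ (n + 2) * (2 + L * INR n) + (INR n + 2 * L).

Definition sigma21 (n : nat) (L : R) : R :=
  (sigA n L - sqrt (sigA n L ^ 2 - 8 * L * INR n * (L ^ (n + 2) - 1) ^ 2))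
  / (2 * L * (L ^ (n + 2) - 1)).

From Stdlib Require Import Reals Lra Psatz Lia.
Open Scope R_scope.

(* Write P = L^(n+2), A = sigA n L and D = 8 L n (P-1)^2, so that
   sigma21 = (A - sqrt (A^2 - D)) / (2 L (P-1)).  Rationalising,
   A - sqrt (A^2 - D) = D / (A + sqrt (A^2 - D)) <= D / A, hence
   sigma21 <= 4 n (P-1) / A.  Clearing denominators, this last bound is at
   most sigma02 by a polynomial inequality in L, n and t = L^(n-2) >= 1,
   which for n >= 5 follows from a decomposition into nonnegative terms and
   for n = 3, 4 is checked directly after substituting L = 1 + x. *)

Lemma Rdiv_le_cross (a b c d : R) :
  0 < b -> 0 < d -> a * d <= c * b -> a / b <= c / d.
Proof.
  intros Hb Hd Hcross.
  apply (Rmult_le_reg_r (b * d)); [nra|].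
  replace (a / b * (b * d)) with (a * d) by (field; lra).
  replace (c / d * (b * d)) with (c * b) by (field; lra).
  exact Hcross.
Qed.

Lemma Rminus_sqrt_mul_le (a d : R) :
  0 <= a -> 0 <= d <= a ^ 2 -> (a - sqrt (a ^ 2 - d)) * a <= d.
Proof.
  intros Ha [Hd0 Hda].
  pose proof (sqrt_pos (a ^ 2 - d)) as Hs0.
  pose proof (sqrt_sqrt (a ^ 2 - d) ltac:(lra)) as Hs2.
  assert (Hsa : sqrt (a ^ 2 - d) <= a).
  { rewrite <- (sqrt_pow2 a Ha) at 2. apply sqrt_le_1_alt. lra. }
  set (s := sqrt (a ^ 2 - d)) in *.
  nra.
Qed.

Lemma sigA_ge (n : nat) (L : R) : 1 < L ->
  L ^ (n + 2) * (2 + L * INR n) <= sigA n L.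
Proof.
  intros HL; unfold sigA.
  pose proof (pos_INR n).
  lra.
Qed.

Lemma sigA_pos (n : nat) (L : R) : 1 < L -> 0 < sigA n L.
Proof.
  intros HL.
  pose proof (pos_INR n).
  assert (1 < L ^ (n + 2)) by (apply Rlt_pow_R1; [lra|lia]).
  pose proof (Rmult_lt_0_compat (L ^ (n + 2)) (2 + L * INR n)).
  pose proof (sigA_ge n L HL).
  nra.
Qed.

Lemma sigA_sqr_ge (n : nat) (L : R) : 1 < L ->
  8 * L * INR n * (L ^ (n + 2) - 1) ^ 2 <= sigA n L ^ 2.
Proof.
  intros HL.
  pose proof (pos_INR n) as Hn.
  pose proof (sigA_ge n L HL) as HA.
  set (P := L ^ (n + 2)) in *.
  set (A := sigA n L) in *.
  assert (HP : 1 <= P) by (apply pow_R1_Rle; lra).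
  assert (Hamgm : 8 * L * INR n <= (2 + L * INR n) ^ 2)
    by (pose proof (pow2_ge_0 (2 - L * INR n)); nra).
  assert (HP2 : (P - 1) ^ 2 <= P ^ 2) by nra.
  assert (HA2 : (P * (2 + L * INR n)) ^ 2 <= A ^ 2)
    by (apply pow_incr; split; [apply Rmult_le_pos|]; nra).
  apply Rle_trans with ((2 + L * INR n) ^ 2 * P ^ 2); [|rewrite <- Rpow_mult_distr; nra].
  apply Rmult_le_compat; try nra; apply pow2_ge_0.
Qed.

Lemma sigma21_le (n : nat) (L : R) : 1 < L ->
  sigma21 n L <= 4 * INR n * (L ^ (n + 2) - 1) / sigA n L.
Proof.
  intros HL.
  pose proof (pos_INR n) as Hn.
  pose proof (sigA_pos n L HL) as HA.
  pose proof (sigA_sqr_ge n L HL) as HD.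
  assert (HP : 1 < L ^ (n + 2)) by (apply Rlt_pow_R1; [lra|lia]).
  unfold sigma21; apply Rdiv_le_cross; [nra|lra|].
  set (P := L ^ (n + 2)) in *.
  replace (4 * INR n * (P - 1) * (2 * L * (P - 1))) with (8 * L * INR n * (P - 1) ^ 2)
    by ring.
  apply Rminus_sqrt_mul_le; [lra|split; [|exact HD]].
  apply Rmult_le_pos; [nra|apply pow2_ge_0].
Qed.

Lemma key_poly_ineq_ge5 (L n t : R) : 1 < L -> 5 <= n -> 1 <= t ->
  4 * n * (L ^ 4 * t - 1) * (L * t - L)
  <= (n - 2) * (1 + L * t) * (L ^ 4 * t * (2 + L * n) + n + 2 * L).
Proof.
  intros HL Hn Ht.
  assert (HL4 : 0 < L ^ 4) by (apply pow_lt; lra).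
  set (c2 := (n - 2) * (2 + L * n) - 4 * n).
  set (c1 := (n - 2) * (L ^ 4 * (2 + L * n) + L * (n + 2 * L)) + 4 * n * L * (L ^ 4 + 1)).
  set (c0 := (n - 2) * (1 + L) * (L ^ 4 * (2 + L * n) + n + 2 * L)).
  assert (Hdecomp : (n - 2) * (1 + L * t) * (L ^ 4 * t * (2 + L * n) + n + 2 * L)
                    - 4 * n * (L ^ 4 * t - 1) * (L * t - L)
                    = L * L ^ 4 * c2 * (t * t - 1) + c1 * (t - 1) + c0)
    by (unfold c0, c1, c2; ring).
  (* c2 >= 0 is where n >= 5 is needed: L n (n-2) >= n (n-2) >= 2 n + 4. *)
  assert (Hc2 : 0 <= c2).
  { assert (0 <= (L - 1) * (n * (n - 2))) by (apply Rmult_le_pos; nra).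
    unfold c2; nra. }
  assert (HLn : 0 <= L ^ 4 * (2 + L * n)) by (apply Rmult_le_pos; nra).
  assert (Hc1 : 0 <= c1).
  { assert (0 <= L * (n + 2 * L)) by (apply Rmult_le_pos; nra).
    assert (0 <= (n - 2) * (L ^ 4 * (2 + L * n) + L * (n + 2 * L)))
      by (apply Rmult_le_pos; lra).
    assert (0 <= 4 * n * L * (L ^ 4 + 1)) by (repeat apply Rmult_le_pos; lra).
    unfold c1; lra. }
  assert (Hc0 : 0 <= c0) by (unfold c0; apply Rmult_le_pos; [apply Rmult_le_pos|]; lra).
  assert (0 <= L * L ^ 4 * c2 * (t * t - 1))
    by (apply Rmult_le_pos; [apply Rmult_le_pos; [apply Rmult_le_pos|]|]; nra).
  assert (0 <= c1 * (t - 1)) by (apply Rmult_le_pos; lra).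
  lra.
Qed.

Lemma key_poly_ineq_3 (L : R) : 1 < L ->
  4 * 3 * (L ^ 4 * L - 1) * (L * L - L)
  <= (3 - 2) * (1 + L * L) * (L ^ 4 * L * (2 + L * 3) + 3 + 2 * L).
Proof.
  intros HL; simpl.
  set (x := L - 1).
  replace L with (1 + x) by (unfold x; ring).
  assert (0 < x) by (unfold x; lra).
  nra.
Qed.

Lemma key_poly_ineq_4 (L : R) : 1 < L ->
  4 * 4 * (L ^ 4 * (L * L) - 1) * (L * (L * L) - L)
  <= (4 - 2) * (1 + L * (L * L)) * (L ^ 4 * (L * L) * (2 + L * 4) + 4 + 2 * L).
Proof.
  intros HL; simpl.
  set (x := L - 1).
  replace L with (1 + x) by (unfold x; ring).
  assert (0 < x) by (unfold x; lra).
  nra.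
Qed.

Lemma sigma_cross_ineq (n : nat) (L : R) : (3 <= n)%nat -> 1 < L ->
  4 * INR n * (L ^ (n + 2) - 1) * (L ^ (n - 1) - L)
  <= (INR n - 2) * (1 + L ^ (n - 1)) * sigA n L.
Proof.
  intros Hn HL; unfold sigA.
  replace (n + 2)%nat with (4 + (n - 2))%nat by lia.
  replace (n - 1)%nat with (1 + (n - 2))%nat by lia.
  rewrite !pow_add, pow_1.
  replace (L ^ 4 * L ^ (n - 2) * (2 + L * INR n) + (INR n + 2 * L))
    with (L ^ 4 * L ^ (n - 2) * (2 + L * INR n) + INR n + 2 * L) by ring.
  destruct (Nat.eq_dec n 3) as [->|Hn3].
  { replace (INR 3) with 3 by (simpl; ring). simpl (3 - 2)%nat.
    rewrite pow_1. exact (key_poly_ineq_3 L HL). }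
  destruct (Nat.eq_dec n 4) as [->|Hn4].
  { replace (INR 4) with 4 by (simpl; ring). simpl (4 - 2)%nat.
    replace (L ^ 2) with (L * L) by ring. exact (key_poly_ineq_4 L HL). }
  apply key_poly_ineq_ge5; [exact HL| |apply pow_R1_Rle; lra].
  replace 5 with (INR 5) by (simpl; ring). apply le_INR. lia.
Qed.

Theorem lemma2p4 (n : nat) (L : R) (hn : (3 <= n)%nat) (hL : 1 < L) :
  sigma21 n L <= sigma02 n L.
Proof.
  apply Rle_trans with (4 * INR n * (L ^ (n + 2) - 1) / sigA n L);
    [exact (sigma21_le n L hL)|].
  assert (Hu : L ^ 1 < L ^ (n - 1)) by (apply Rlt_pow; [lra|lia]).
  rewrite pow_1 in Hu.
  unfold sigma02; apply Rdiv_le_cross.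
  - exact (sigA_pos n L hL).
  - lra.
  - exact (sigma_cross_ineq n L hn hL).
Qed.
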